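(* For an integer $n$ and real $x$, define $$S_n(x)=(18n+24)\sin(x)-(9n+27)\sin((n+1)x)+9n\sin((n+2)x)+2\sin(4x)-\sin(5x)$$ and $$L_n(x)=(18n+24)\sin(x)-18n\sin(x/2)-29.1.$$ Then for all integers $n\geq 21$ and all $x\in(0,2\pi/3)$, $S_n(x)>L_n(x)$. *)

From Stdlib Require Import Reals Lra Lia.
Open Scope R_scope.

Definition S_n (n : nat) (x : R) : R :=
  (18 * INR n + 24) * sin x - (9 * INR n + 27) * sin ((INR n + 1) * x)
  + 9 * INR n * sin ((INR n + 2) * x) + 2 * sin (4 * x) - sin (5 * x).

Definition L_n (n : nat) (x : R) : R :=
  (18 * INR n + 24) * sin x - 18 * INR n * sin (x / 2) - 291 / 10.

From Stdlib Require Import Reals.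
From Stdlib Require Import Lra Lia.
Open Scope R_scope.

(* Put h = x/2 and b = (n + 3/2) x, so that (n+1) x = b - h and
   (n+2) x = b + h.  Expanding with the addition formulas, and writing
   s = sin h, t = cos h, u = sin b, v = cos b, T = 2 sin(4x) - sin(5x):

     S_n(x) - L_n(x) = 18 n s (1 + v) + 27 s v - 27 t u + T + 29.1.

   Since s > 0 and 1 + v >= 0 the first term only grows with n, so it suffices
   to treat n = 21, where the right-hand side equals A - 27 t u with
   A = B + 405 s (1 + v) and B = T + 29.1 - 27 s.  For x in (0, 2 pi/3) we have
   t > 1/2 (so s^2 < 3/4) and the crude bounds T >= -3, T >= -20 s; these give
   B > 0 and B^2 + 810 B s > 729.  The latter is exactly the negative
   discriminant condition making A^2 - 729 u^2 = A^2 - 729 (1 - v^2), a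
   quadratic in 1 + v, positive; hence 27 t u <= 27 |u| < A. *)

Definition tail (x : R) : R := 2 * sin (4 * x) - sin (5 * x).

Lemma sin_cubic_lower (a : R) : 0 <= a -> a <= 4 -> a - a * a * a / 6 <= sin a.
Proof.
  intros ha0 ha4.
  destruct (pre_sin_bound a 0 ha0 ha4) as [hlow _].
  unfold sin_approx, sin_term in hlow; simpl in hlow; lra.
Qed.

Lemma sin_half_ge_quarter (x : R) : 0 <= x -> x <= 3 -> x / 4 <= sin (x / 2).
Proof.
  intros hx0 hx3.
  pose proof (sin_cubic_lower (x / 2)) as hcubic.
  assert (hsq : x / 2 * (x / 2) <= 3) by nra.
  assert (x / 2 - x / 2 * (x / 2) * (x / 2) / 6 >= x / 4) by nra.
  lra.
Qed.

Lemma tail_ge_m3 (x : R) : -3 <= tail x.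
Proof.
  unfold tail.
  pose proof (SIN_bound (4 * x)); pose proof (SIN_bound (5 * x)); lra.
Qed.

(* Near 0 the tail is at least -5x (sin(4x) >= 0, sin(5x) < 5x); away from 0
   the bound -3 is better.  Both are at least -20 sin(x/2). *)
Lemma tail_ge_sin_half (x : R) :
  0 < x < 2 * PI / 3 -> -20 * sin (x / 2) <= tail x.
Proof.
  intros [hx0 hx1].
  pose proof PI_4 as hpi_ub; pose proof PI2_3_2 as hpi_lb.
  assert (hquarter : x / 4 <= sin (x / 2)) by (apply sin_half_ge_quarter; lra).
  destruct (Rle_lt_dec x (6 / 10)) as [hsmall | hlarge].
  - assert (0 <= sin (4 * x)) by (apply sin_ge_0; lra).
    assert (sin (5 * x) < 5 * x) by (apply sin_lt_x; lra).
    unfold tail; lra.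
  - pose proof (tail_ge_m3 x); lra.
Qed.

Lemma S_minus_L_expansion (n : nat) (x : R) :
  let s := sin (x / 2) in let t := cos (x / 2) in
  let u := sin ((INR n + 3 / 2) * x) in let v := cos ((INR n + 3 / 2) * x) in
  S_n n x - L_n n x
  = 18 * INR n * s * (1 + v) + 27 * s * v - 27 * t * u + tail x + 291 / 10.
Proof.
  intros s t u v.
  assert (e1 : (INR n + 1) * x = (INR n + 3 / 2) * x - x / 2) by field.
  assert (e2 : (INR n + 2) * x = (INR n + 3 / 2) * x + x / 2) by field.
  unfold S_n, L_n, tail; rewrite e1, e2, sin_minus, sin_plus.
  fold s t u v; ring.
Qed.

Lemma quadratic_pos (a b c w : R) :
  0 < a -> b * b < 4 * a * c -> 0 < a * w * w + b * w + c.
Proof.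
  intros ha hdisc.
  assert (hsq : 4 * a * (a * w * w + b * w + c)
                = (2 * a * w + b) * (2 * a * w + b) + (4 * a * c - b * b)) by ring.
  assert (0 <= (2 * a * w + b) * (2 * a * w + b)) by apply Rle_0_sqr.
  apply (Rmult_lt_reg_l (4 * a)); lra.
Qed.

Lemma circle_bound (s B t u v : R) :
  0 < s -> 0 < B -> 729 < B * B + 810 * B * s ->
  u * u + v * v = 1 -> t * t <= 1 ->
  27 * t * u < B + 405 * s * (1 + v).
Proof.
  intros hs hB hdisc huv ht.
  set (w := 1 + v).
  set (A := B + 405 * s * w).
  assert (hw : 0 <= w) by (unfold w; nra).
  assert (hA : 0 < A) by (unfold A; nra).
  assert (hquad : 0 < (405 * 405 * s * s + 729) * w * w
                      + (810 * B * s - 1458) * w + B * B).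
  { apply quadratic_pos; nra. }
  assert (hA2 : 729 * (u * u) < A * A).
  { replace (u * u) with (1 - v * v) by lra.
    assert (A * A - 729 * (1 - v * v)
            = (405 * 405 * s * s + 729) * w * w + (810 * B * s - 1458) * w + B * B)
      by (unfold A, w; ring).
    lra. }
  nra.
Qed.

Lemma offset_bounds (s T : R) :
  0 < s -> s * s < 3 / 4 -> -3 <= T -> -20 * s <= T ->
  0 < T + 291 / 10 - 27 * s /\
  729 < (T + 291 / 10 - 27 * s) * (T + 291 / 10 - 27 * s)
        + 810 * (T + 291 / 10 - 27 * s) * s.
Proof.
  intros hs hs2 hT3 hT20.
  set (B := T + 291 / 10 - 27 * s).
  assert (hs1 : s < 87 / 100) by nra.
  split.
  - unfold B; lra.
  - destruct (Rle_lt_dec s (15 / 100)).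
    + assert (B >= 291 / 10 - 47 * s) by (unfold B; lra); nra.
    + assert (B >= 261 / 10 - 27 * s) by (unfold B; lra); nra.
Qed.

Lemma reduced_inequality (N s t u v T : R) :
  21 <= N -> 0 < s -> 1 / 2 < t -> s * s + t * t = 1 -> u * u + v * v = 1 ->
  -3 <= T -> -20 * s <= T ->
  0 < 18 * N * s * (1 + v) + 27 * s * v - 27 * t * u + T + 291 / 10.
Proof.
  intros hN hs ht hst huv hT3 hT20.
  assert (hs2 : s * s < 3 / 4) by nra.
  destruct (offset_bounds s T hs hs2 hT3 hT20) as [hB hdisc].
  assert (hkey : 27 * t * u < (T + 291 / 10 - 27 * s) + 405 * s * (1 + v))
    by (apply circle_bound; nra).
  assert (hgrow : 378 * s * (1 + v) <= 18 * N * s * (1 + v)).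
  { assert (0 <= s * (1 + v)) by nra. nra. }
  lra.
Qed.

Theorem lemma3 : forall (n : nat) (x : R),
  (21 <= n)%nat -> 0 < x < 2 * PI / 3 -> S_n n x > L_n n x.
Proof.
  intros n x hn [hx0 hx1].
  pose proof PI_RGT_0 as hpi_pos.
  assert (hN : 21 <= INR n)
    by (replace 21 with (INR 21) by (simpl; lra); apply le_INR; lia).
  assert (hs : 0 < sin (x / 2)) by (apply sin_gt_0; lra).
  assert (ht : 1 / 2 < cos (x / 2)).
  { rewrite <- cos_PI3; apply cos_decreasing_1; lra. }
  assert (hcircle : forall y, sin y * sin y + cos y * cos y = 1)
    by (intro y; pose proof (sin2_cos2 y) as e; unfold Rsqr in e; lra).
  pose proof (S_minus_L_expansion n x) as hexp; cbv zeta in hexp.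
  pose proof (reduced_inequality (INR n) (sin (x / 2)) (cos (x / 2))
                (sin ((INR n + 3 / 2) * x)) (cos ((INR n + 3 / 2) * x)) (tail x)
                hN hs ht (hcircle _) (hcircle _) (tail_ge_m3 x)
                (tail_ge_sin_half x (conj hx0 hx1))).
  lra.
Qed.
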